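(* Let $T$ be a locally compact Hausdorff space and $\tau : T\to T$ a proper local homeomorphism. Then $(T,\tau)$ is topologically free if and only if the topological graph $E = (T,T,\tau,\mathrm{id})$ is topologically free.
   Context: $(T,\tau)$ is topologically free if for all $m\neq n\in\mathbb{N}$ the set $H_{m,n} := \{t\in T : \tau^m(t) = \tau^n(t)\}$ has empty interior. The topological graph $E = (E^0,E^1,d,r)$ has vertex space $E^0 = T$, edge space $E^1 = T$, source map $d = \tau$ and range map $r = \mathrm{id}$. A path of length $n\ge1$ in $E$ is $e = (e_1,\dots,e_n)$ with $e_k\in E^1$ and $d(e_k) = r(e_{k+1})$; it is a loop if $r(e_1) = d(e_n)$, with base point $r(e_1)$. An entry of a loop $e$ is an edge $f\in E^1$ with $r(f) = r(e_k)$ and $f\neq e_k$ for some $k$. The topological graph $E$ is topologically free if the set of base points of loops without entries has empty interior in $E^0$. *)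

From HB Require Import structures.
From mathcomp Require Import all_boot all_order.
From mathcomp Require Import all_classical all_reals all_analysis.
Set Implicit Arguments. Unset Strict Implicit. Unset Printing Implicit Defensive.
Local Open Scope classical_set_scope.

Definition proper_map (T U : topologicalType) (f : T -> U) : Prop :=
  continuous f /\ forall K : set U, compact K -> compact (f @^-1` K).

(* A local homeomorphism: continuous, and every point has an open
   neighbourhood U such that f(U) is open and f restricted to U is a
   homeomorphism onto f(U) (i.e. injective on U and open on U). *)
Definition local_homeomorphism (T U : topologicalType) (f : T -> U) : Prop :=
  continuous f /\
  forall x : T, exists V : set T,
    [/\ open V, V x, open (f @` V), {in V &, injective f} &
        forall W : set T, open W -> W `<=` V -> open (f @` W)].

Definition H_set (T : Type) (tau : T -> T) (m n : nat) : set T :=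
  [set t | iter m tau t = iter n tau t].

Definition dyn_topologically_free (T : topologicalType) (tau : T -> T) : Prop :=
  forall m n : nat, m <> n -> interior (H_set tau m n) = set0.

(* Topological graphs E = (E0, E1, d, r).  A path of length n >= 1 is
   encoded as a function e : nat -> E1 whose relevant entries are
   e 0, ..., e (n-1) (i.e. e_1, ..., e_n in the paper's indexing). *)
Definition graph_path (E0 E1 : Type) (d r : E1 -> E0) (n : nat) (e : nat -> E1) : Prop :=
  (1 <= n)%N /\ forall k : nat, (k.+1 < n)%N -> d (e k) = r (e k.+1).

Definition graph_loop (E0 E1 : Type) (d r : E1 -> E0) (n : nat) (e : nat -> E1) : Prop :=
  graph_path d r n e /\ r (e 0%N) = d (e n.-1).

Definition has_entry (E0 E1 : Type) (d r : E1 -> E0) (n : nat) (e : nat -> E1) : Prop :=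
  exists (f : E1) (k : nat), (k < n)%N /\ r f = r (e k) /\ f <> e k.

Definition base_points_loops_without_entries (E0 E1 : Type) (d r : E1 -> E0) : set E0 :=
  [set v | exists (n : nat) (e : nat -> E1),
     [/\ graph_loop d r n e, ~ has_entry d r n e & r (e 0%N) = v]].

Definition graph_topologically_free (E0 : topologicalType) (E1 : Type) (d r : E1 -> E0) : Prop :=
  interior (base_points_loops_without_entries d r) = set0.

From mathcomp Require Import all_boot all_order.
From mathcomp Require Import all_classical all_reals all_analysis.
Local Open Scope classical_set_scope.

(* Since the range map of E is the identity, an edge f with r f = r e_k is
   e_k itself, so no loop of E has an entry and a loop is just a finite
   tau-orbit returning to its start: the base points of loops without
   entries are the periodic points of tau, a countable union of the closed
   sets Fix(tau^(k+1)).  If (T, tau) is topologically free these have empty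
   interior, hence so does their union by the Baire category theorem for
   locally compact Hausdorff spaces.  Conversely, if m < n and H_{m,n} had
   an interior point, tau^m would map the interior of H_{m,n} to an open
   (tau being an open map) nonempty set of points of period n - m. *)

Lemma continuous_iter (T : topologicalType) (f : T -> T) (n : nat) :
  continuous f -> continuous (iter n f).
Proof.
move=> cf; elim: n => [|n IH] x /=; first exact: cvg_id.
exact: (continuous_comp (IH x) (cf _)).
Qed.

Lemma closed_fixed_points (T : topologicalType) (f : T -> T) :
  hausdorff_space T -> continuous f -> closed [set t | f t = t].
Proof.
move=> hT cf t clt; apply: hT => A B /= At Bt.
have [s [/= fs [Bs Afs]]] := clt _ (filterI Bt (cf t _ At)).
by exists s; split => //; rewrite -fs.
Qed.

Lemma local_homeomorphism_open_image (T U : topologicalType) (f : T -> U)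
    (W : set T) :
  local_homeomorphism f -> open W -> open (f @` W).
Proof.
move=> [_ hf] oW; rewrite openE => _ [w Ww <-].
have [V [oV Vw _ _ openfV]] := hf w.
have oWV : open (f @` (W `&` V)) by apply: openfV; [exact: openI|exact: subIsetr].
apply: (@filterS _ _ _ (f @` (W `&` V))); first by move=> _ [u [Wu _] <-]; exists u.
by apply: open_nbhs_nbhs; split => //; exists w.
Qed.

Lemma local_homeomorphism_open_image_iter (T : topologicalType) (f : T -> T)
    (n : nat) (W : set T) :
  local_homeomorphism f -> open W -> open (iter n f @` W).
Proof.
move=> hf; elim: n W => [|n IH] W oW; first by rewrite image_id.
rewrite (_ : iter n.+1 f @` W = f @` (iter n f @` W)); last by rewrite -image_comp.
exact/local_homeomorphism_open_image/IH.
Qed.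

Lemma base_points_loops_without_entries_idE (T : Type) (f : T -> T) :
  base_points_loops_without_entries f (fun t : T => t) =
  \bigcup_k [set t | iter k.+1 f t = t].
Proof.
apply/seteqP; split => [v|v [k _ fkv]].
- move=> [n [e [[[n_gt0 path_e] loop_e] _ <-]]].
  have orbit_e k : (k < n)%N -> e k = iter k f (e 0%N).
    elim: k => [|k IH] ltkn //=; rewrite -IH ?(ltnW ltkn) //; exact/esym/path_e.
  case: n n_gt0 path_e loop_e orbit_e => // n _ _ loop_e orbit_e.
  by exists n => //=; rewrite -orbit_e.
- by exists k.+1, (fun i => iter i f v); split => // - [g [i [_ [-> ]]]].
Qed.

Lemma H_setC (T : Type) (f : T -> T) (m n : nat) :
  H_set f m n = H_set f n m.
Proof. by apply/seteqP; split => t; rewrite /H_set /= => ->. Qed.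

Section LocallyCompactBaire.
Variable T : topologicalType.
Hypothesis hT : hausdorff_space T.
Hypothesis hlc : locally_compact [set: T].

Lemma compact_closed_nbhs (x : T) :
  exists K, [/\ nbhs x K, compact K & closed K].
Proof.
have [K Kx [cK clK]] := hlc x I.
by exists K; split => //; move: Kx; rewrite withinET.
Qed.

Lemma open_closure_subset_setD (C W : set T) :
  closed C -> C° = set0 -> open W -> W !=set0 ->
  exists V : set T, [/\ open V, V !=set0 & closure V `<=` W `\` C].
Proof.
move=> clC C0 oW [w Ww].
have [y [Wy Cy]] : (W `\` C) !=set0.
  apply: contrapT => noWC; suff : C° w by rewrite C0.
  apply: filterS (open_nbhs_nbhs (conj oW Ww)) => x Wx.
  by apply: contrapT => Cx; apply: noWC; exists x.
have [K [Ky cK _]] := compact_closed_nbhs y.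
have WCy : nbhs y (W `\` C).
  by apply: open_nbhs_nbhs; split => //; apply: openI => //; exact: closed_openC.
have [V Vy clV] := compact_regular hT cK Ky WCy.
exists V°; split; [exact: open_interior|by exists y; exact: Vy|].
exact: subset_trans (closureS (@interior_subset _ V)) clV.
Qed.

Lemma compact_nested_closure (K : set T) (U : nat -> set T) :
  compact K -> U 0%N `<=` K -> (forall k, U k !=set0) ->
  (forall k, U k.+1 `<=` U k) ->
  exists p, forall k, closure (U k) p.
Proof.
move=> cK UK U_neq0 decrU.
have decrU_le i j : (i <= j)%N -> U j `<=` U i.
  move=> /subnK <-; elim: (j - i)%N => [|d IH]; first by rewrite add0n.
  by rewrite addSn; apply: subset_trans (decrU _) IH.
pose F := filter_from [set: nat] U.
have F_filter : Filter F.
  apply: filter_from_filter; first by exists 0%N.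
  move=> i j _ _; exists (maxn i j) => //; rewrite subsetI.
  by split; apply: decrU_le; [exact: leq_maxl|exact: leq_maxr].
have [|p [_ Fp]] := cK F (filter_from_proper F_filter (fun k _ => U_neq0 k)).
  by exists 0%N.
by exists p => k B Bp; apply: Fp => //; exists k.
Qed.

Lemma locally_compact_Baire (C : nat -> set T) :
  (forall k, closed (C k)) -> (forall k, (C k)° = set0) ->
  (\bigcup_k C k)° = set0.
Proof.
move=> clC C0; apply/seteqP; split => // x0 Cx0.
have step (kW : nat * set T) : exists V : set T, open kW.2 -> kW.2 !=set0 ->
    [/\ open V, V !=set0 & closure V `<=` kW.2 `\` C kW.1].
  case: kW => k W /=; have [oW|] := pselect (open W); last by exists set0.
  have [Wn0|] := pselect (W !=set0); last by exists set0.
  by have [V hV] := open_closure_subset_setD _ _ (clC k) (C0 k) oW Wn0; exists V.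
have [g hg] := choice step.
have [K [Kx0 cK _]] := compact_closed_nbhs x0.
pose U := fix U n := if n is k.+1 then g (k, U k) else (\bigcup_k C k)° `&` K°.
have U_open_neq0 k : open (U k) /\ U k !=set0.
  elim: k => [|k [oU Un0]] /=; last by have [] := hg (k, U k) oU Un0.
  split; first by apply: openI; exact: open_interior.
  by exists x0; split => //; exact: nbhs_interior.
have closureU k : closure (U k.+1) `<=` U k `\` C k.
  by have [oU Un0] := U_open_neq0 k; have [] := hg (k, U k) oU Un0.
have [|||p Up] := @compact_nested_closure K U cK.
- by move=> x [_ Kx]; exact: interior_subset.
- by move=> k; have [] := U_open_neq0 k.
- by move=> k x /subset_closure /closureU [].
have [[Cp _] _] := closureU 0%N p (Up 1%N).
have [k _ Ckp] := interior_subset Cp.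
by have [_] := closureU k p (Up k.+1).
Qed.

End LocallyCompactBaire.

Lemma graph_free_interior_H_set (T : topologicalType) (f : T -> T) (m n : nat) :
  local_homeomorphism f -> (m < n)%N ->
  graph_topologically_free (E0 := T) (E1 := T) f (fun t : T => t) ->
  (H_set f m n)° = set0.
Proof.
rewrite /graph_topologically_free base_points_loops_without_entries_idE.
move=> hf ltmn gf; apply/seteqP; split => // x Hx.
have [d def_n] : exists d, n = (m + d.+1)%N.
  by exists (n - m).-1; rewrite prednK ?subn_gt0 // subnKC // ltnW.
have periodic : iter m f @` (H_set f m n)° `<=` \bigcup_k [set t | iter k.+1 f t = t].
  move=> _ [w /interior_subset Hw <-]; exists d => //.
  change (iter d.+1 f (iter m f w) = iter m f w).
  by rewrite -iterD addnC -def_n -Hw.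
suff : (\bigcup_k [set t | iter k.+1 f t = t])° (iter m f x) by rewrite gf.
apply: filterS periodic _; apply: open_nbhs_nbhs; split; last by exists x.
exact/local_homeomorphism_open_image_iter/open_interior.
Qed.

Theorem lemma6p2 (T : topologicalType) (tau : T -> T)
  (hT : hausdorff_space T) (hlc : locally_compact [set: T])
  (hprop : proper_map tau) (hloc : local_homeomorphism tau) :
  dyn_topologically_free tau <->
  graph_topologically_free (E0 := T) (E1 := T) tau (fun t : T => t).
Proof.
split=> [df|gf m n neq_mn].
- rewrite /graph_topologically_free base_points_loops_without_entries_idE.
  apply: locally_compact_Baire => // k.
    exact/closed_fixed_points/continuous_iter/hloc.1.
  exact: (df k.+1 0%N).
- have [ltmn|ltnm|//] := ltngtP m n; first exact: graph_free_interior_H_set.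
  by rewrite H_setC; exact: graph_free_interior_H_set.
Qed.
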